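(* Let $H=(V,F)$ be a finite hypergraph, $(r_i)_{i\in V}$ positive integers, and $\boldsymbol u=\{u^\alpha_{i\to j}\}$ arbitrary matrix weights with $u^\alpha_{i\to j}\in\mathbb{C}^{r_j\times r_i}$ ($\alpha\in F$, distinct $i,j\in\alpha$). Fix norms on each $\mathbb{C}^{r_i}$, let $\|\cdot\|$ be the induced operator norms, and let $\|\boldsymbol u\|=\{\|u^\alpha_{i\to j}\|\}$ be the corresponding scalar weights. Then $$\rho(\mathcal M(\boldsymbol u))\le\rho(\mathcal M(\|\boldsymbol u\|))\le\max_{\alpha,i,j}\|u^\alpha_{i\to j}\|\,\rho(\mathcal M),$$ where $\rho$ denotes spectral radius.
   Context: Directed edges $\vec E=\{(\alpha\to i):i\in\alpha\in F\}$ with $s(\alpha\to i)=\alpha$, $t(\alpha\to i)=i$; $e'\rightharpoonup e$ means $t(e')\in s(e)$, $t(e')\ne t(e)$, $s(e')\ne s(e)$. For matrix weights $\boldsymbol v$, $\mathcal M(\boldsymbol v)$ acts on $\bigoplus_e\mathbb{C}^{r_{t(e)}}$ by $(\mathcal M(\boldsymbol v)f)(e)=\sum_{e':e'\rightharpoonup e}v^{s(e)}_{t(e')\to t(e)}f(e')$; for scalar weights (all $r_i=1$) it is a $|\vec E|\times|\vec E|$ matrix. $\mathcal M$ (the directed edge matrix) denotes $\mathcal M(\boldsymbol 1)$ with all $r_i=1$ and all weights equal to $1$. *)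

From mathcomp Require Import all_boot all_order all_algebra.
From mathcomp Require Import all_classical all_reals.
From mathcomp Require Import complex.
Set Implicit Arguments. Unset Strict Implicit. Unset Printing Implicit Defensive.
Import Order.TTheory GRing.Theory Num.Theory.
Local Open Scope ring_scope.
Local Open Scope classical_set_scope.

Section Hypergraph.
Variable R : realType.
Local Notation C := (R[i]).

(* Spectral radius: sup of moduli of the (complex) eigenvalues; 0 for a 0x0 matrix. *)
Definition specrad (n : nat) (A : 'M[C]_n) : R :=
  sup [set Normc.normc a | a in [set a | eigenvalue A a]].

Definition is_vnorm (n : nat) (N : 'cV[C]_n -> R) : Prop :=
  [/\ (forall x, 0 <= N x),
      (forall x, N x = 0 -> x = 0),
      (forall (a : C) x, N (a *: x) = Normc.normc a * N x) &
      (forall x y, N (x + y) <= N x + N y)].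

Definition opnorm (m n : nat) (Nn : 'cV[C]_n -> R) (Nm : 'cV[C]_m -> R)
  (A : 'M[C]_(m, n)) : R :=
  sup [set Nm (A *m x) | x in [set x | Nn x <= 1]].

Variables (V : finType) (F : {set {set V}}).

(* Directed edges (alpha -> i), alpha \in F, i \in alpha. *)
Definition dedge : finType := {p : {set V} * V | (p.1 \in F) && (p.2 \in p.1)}.
Definition src (e : dedge) : {set V} := (val e).1.
Definition tgt (e : dedge) : V := (val e).2.

Definition nbr (e' e : dedge) : bool :=
  [&& tgt e' \in src e, tgt e' != tgt e & src e' != src e].

(* Index set of  ⊕_e C^{r_{t(e)}}. *)
Definition bidx (r : V -> nat) : finType := {e : dedge & 'I_(r (tgt e))}.

(* The (block) directed edge matrix M(v), for matrix weights
   v a i j : C^{r_j x r_i}  (i.e. v^a_{i -> j}). *)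
Definition Mop (r : V -> nat) (v : forall (a : {set V}) (i j : V), 'M[C]_(r j, r i))
  : 'M[C]_#|bidx r| :=
  \matrix_(x, y)
    (let p := enum_val x in let q := enum_val y in
     if nbr (tag q) (tag p)
     then v (src (tag p)) (tgt (tag q)) (tgt (tag p)) (tagged p) (tagged q)
     else 0).

(* Scalar weights as 1x1 matrix weights (all r_i = 1). *)
Definition scalw (w : {set V} -> V -> V -> R) :
  forall (a : {set V}) (i j : V), 'M[C]_((fun _ : V => 1%N) j, (fun _ : V => 1%N) i) :=
  fun a i j => (Complex (w a i j) 0)%:M.

Definition maxw (w : {set V} -> V -> V -> R) : R :=
  \big[Num.max/0]_(a in F) \big[Num.max/0]_(i in a) \big[Num.max/0]_(j in a | j != i) w a i j.

End Hypergraph.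

From mathcomp Require Import all_boot all_order all_algebra.
From mathcomp Require Import all_classical all_reals.
From mathcomp Require Import complex.
From mathcomp Require Import topology normedtype derive.
From mathcomp Require Import lra.
From mathcomp Require Import matrix_topology matrix_normedtype.
Import numFieldTopology.Exports numFieldNormedType.Exports.
Import Order.TTheory GRing.Theory Num.Theory.
Set Implicit Arguments. Unset Strict Implicit. Unset Printing Implicit Defensive.
Local Open Scope ring_scope.
Local Open Scope complex_scope.

(* An eigenvector x of M(u) splits into blocks x_e of C^(r_t(e)).  Taking norms
   in the eigen-equation blockwise and using |u x| <= |u| |x| gives
   |lambda| y <= M(|u|) y for the nonnegative nonzero vector y_e = |x_e|, and a
   Collatz-Wielandt argument turns such a subinvariant vector into
   |lambda| <= rho(M(|u|)).  The second inequality is the same argument applied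
   to the entrywise domination M(|u|) <= (max |u|) M. *)

Section ComplexModulus.
Variable R : realType.
Local Notation C := (R[i]).

Lemma normcE (z : C) : (Normc.normc z)%:C = `|z|. Proof. by []. Qed.

Lemma normc_ge0 (z : C) : 0 <= Normc.normc z.
Proof. by rewrite -ler0c normcE. Qed.

Lemma normc_real (a : R) : Normc.normc a%:C = `|a|.
Proof. by rewrite /Normc.normc /= expr0n /= addr0 sqrtr_sqr. Qed.

Lemma normc_le_ReIm (a b : R) : Normc.normc (a +i* b) <= `|a| + `|b|.
Proof.
rewrite /Normc.normc -(@ger0_norm _ (`|a| + `|b|)) ?addr_ge0 //.
rewrite -sqrtr_sqr ler_sqrt ?addr_ge0 ?sqr_ge0 //.
rewrite sqrrD !real_normK ?num_real // lerD2r lerDl mulrn_wge0 // mulr_ge0 //.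
Qed.

End ComplexModulus.

Section VectorNorm.
Variables (R : realType) (n : nat) (N : 'cV[R[i]]_n -> R).
Local Notation C := (R[i]).
Hypothesis HN : is_vnorm N.
Local Open Scope classical_set_scope.

Lemma vnorm_ge0 x : 0 <= N x. Proof. by case: HN. Qed.
Lemma vnorm_eq0 x : N x = 0 -> x = 0. Proof. by case: HN => _ H _ _; apply: H. Qed.
Lemma vnormZ a x : N (a *: x) = Normc.normc a * N x. Proof. by case: HN. Qed.
Lemma vnormD x y : N (x + y) <= N x + N y. Proof. by case: HN. Qed.

Lemma vnorm0 : N 0 = 0.
Proof. by rewrite -(scale0r (0 : 'cV[C]_n)) vnormZ Normc.normc0 mul0r. Qed.

Lemma vnormN x : N (- x) = N x.
Proof. by rewrite -scaleN1r vnormZ (normcN (1 : C)) Normc.normc1 mul1r. Qed.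

Lemma vnorm_gt0 x : x != 0 -> 0 < N x.
Proof.
by move=> x0; rewrite lt_def vnorm_ge0 andbT; apply: contra x0 => /eqP/vnorm_eq0->.
Qed.

Lemma vnorm_sum (I : finType) (P : pred I) (f : I -> 'cV[C]_n) :
  N (\sum_(i | P i) f i) <= \sum_(i | P i) N (f i).
Proof.
elim/big_rec2: _ => [|i y1 y2 _ H]; first by rewrite vnorm0.
by apply: le_trans (vnormD _ _) _; rewrite lerD2l.
Qed.

Lemma vnorm_dist x y : `|N x - N y| <= N (x - y).
Proof.
have h1 : N x <= N (x - y) + N y by rewrite -{1}(subrK y x); apply: vnormD.
have h2 : N y <= N (x - y) + N x.
  by rewrite -(vnormN (x - y)) opprB -{1}(subrK x y); apply: vnormD.
rewrite ler_norml; apply/andP; split; lra.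
Qed.

Lemma cV_delta_sum (x : 'cV[C]_n) : x = \sum_i x i 0 *: delta_mx i 0.
Proof.
apply/matrixP => i j; rewrite summxE (bigD1 i) //= big1 ?addr0.
  by rewrite !mxE !ord1 !eqxx mulr1.
by move=> k /negbTE ki; rewrite !mxE eq_sym ki mulr0.
Qed.

Lemma vnorm_le_coord x : N x <= \sum_i Normc.normc (x i 0) * N (delta_mx i 0).
Proof.
rewrite {1}[x]cV_delta_sum; apply: le_trans (vnorm_sum _ _) _.
by apply: ler_sum => i _; rewrite vnormZ.
Qed.

(* C^n is identified with R^(2n) by splitting each coordinate into its real
   and imaginary parts; compactness of the real unit sphere then gives
   equivalence of N with the sup norm. *)
Definition cV_of_rV (z : 'rV[R]_(n + n)) : 'cV[C]_n :=
  \col_i ((z 0 (lshift n i)) +i* (z 0 (rshift n i))).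

Definition rV_of_cV (x : 'cV[C]_n) : 'rV[R]_(n + n) :=
  \row_j (match fintype.split j with
          | inl i => complex.Re (x i 0)
          | inr i => complex.Im (x i 0)
          end).

Lemma cV_of_rVB z w : cV_of_rV (z - w) = cV_of_rV z - cV_of_rV w.
Proof. by apply/matrixP => i j; rewrite !mxE. Qed.

Lemma cV_of_rVZ (a : R) z : cV_of_rV (a *: z) = a%:C *: cV_of_rV z.
Proof. by apply/matrixP => i j; rewrite !mxE; simpc. Qed.

Lemma rV_of_cV0 : rV_of_cV 0 = 0.
Proof. by apply/rowP => j; rewrite !mxE; case: (fintype.split j) => k; rewrite mxE. Qed.

Lemma rV_of_cVK : cancel rV_of_cV cV_of_rV.
Proof.
move=> x; apply/matrixP => i j; rewrite !mxE (unsplitK (inl i)) (unsplitK (inr i)) ord1.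
by case: (x i 0).
Qed.

Lemma cV_of_rVK : cancel cV_of_rV rV_of_cV.
Proof.
move=> z; apply/rowP => j; rewrite mxE -(splitK j).
by case: (fintype.split j) => k; rewrite unsplitK !mxE /= ?ord1.
Qed.

Lemma rV_entry_le_norm (z : 'rV[R]_(n + n)) j : `|z 0 j| <= `|z|.
Proof.
rewrite [leRHS]/Num.norm /= mx_normrE.
exact: (le_bigmax _ (fun ij : 'I_1 * 'I_(n + n) => `|z ij.1 ij.2|) (0, j)).
Qed.

Lemma normc_cV_of_rV z i : Normc.normc (cV_of_rV z i 0) <= 2 * `|z|.
Proof.
rewrite mxE; apply: le_trans (normc_le_ReIm _ _) _.
by rewrite mulr2n mulrDl mul1r lerD ?rV_entry_le_norm.
Qed.

Lemma vnorm_cV_of_rV_le z :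
  N (cV_of_rV z) <= (2 * \sum_i N (delta_mx i 0)) * `|z|.
Proof.
apply: le_trans (vnorm_le_coord _) _.
rewrite mulrAC mulr_sumr; apply: ler_sum => i _.
by rewrite ler_wpM2r ?vnorm_ge0 ?normc_cV_of_rV.
Qed.

Lemma continuous_vnorm_cV_of_rV : continuous (N \o cV_of_rV).
Proof.
move=> z; apply/(@cvgrPdist_lt _ _ _ (nbhs z) (nbhs_filter z)) => e e0.
set L := 2 * \sum_i N (delta_mx i 0).
have L1 : 0 < L + 1.
  by rewrite ltr_wpDl ?mulr_ge0 ?sumr_ge0 // => i _; apply: vnorm_ge0.
near=> t.
apply: le_lt_trans (vnorm_dist _ _) _.
rewrite -cV_of_rVB; apply: le_lt_trans (vnorm_cV_of_rV_le _) _.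
apply: (@le_lt_trans _ _ ((L + 1) * `|z - t|)); first by rewrite ler_wpM2r ?lerDl.
rewrite -ltr_pdivlMl // mulrC.
near: t.
have := @near_ball _ _ z _ (divr_gt0 e0 L1).
by apply: filterS => t; rewrite -ball_normE /ball_.
Unshelve. all: end_near.
Qed.

Lemma vnorm_cV_of_rV_ge : exists2 m : R, 0 < m &
  forall z, m * `|z| <= N (cV_of_rV z).
Proof.
have [n0|npos] := posnP n.
  exists 1 => // z; rewrite mul1r (_ : z = 0) ?normr0 ?vnorm_ge0 //.
  by apply/rowP => -[j hj]; exfalso; move: hj; rewrite n0.
pose S := [set z : 'rV[R]_(n + n) | `|z| = 1].
have S0 : S !=set0.
  pose z0 := const_mx 1 : 'rV[R]_(n + n).
  have z0n : `|z0| != 0.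
    rewrite normr_eq0; apply/eqP => /rowP /(_ (lshift n (Ordinal npos))).
    by rewrite !mxE => /eqP; rewrite oner_eq0.
  exists (`|z0|^-1 *: z0); rewrite /S /= normrZ normrV ?unitfE // normr_id.
  by rewrite mulVf.
have cS : compact S.
  apply: bounded_closed_compact.
    rewrite /= /bounded_near; near=> M; move=> z /= Sz; rewrite Sz.
    near: M; exact: nbhs_pinfty_ge.
  exact: (continuous_closedP _).1 (@norm_continuous _ _) _ (@closed_eq R 1).
have cf : {within S, continuous (N \o cV_of_rV)}.
  exact/continuous_subspaceT/continuous_vnorm_cV_of_rV.
have [c /set_mem Sc cmin] := compact_EVT_min S0 cS cf.
have m0 : 0 < N (cV_of_rV c).
  apply/vnorm_gt0/eqP => c0; move: Sc.
  by rewrite /S /= -[c]cV_of_rVK c0 rV_of_cV0 normr0 => /eqP; rewrite eq_sym oner_eq0.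
exists (N (cV_of_rV c)) => // z.
have [->|z0] := eqVneq z 0; first by rewrite normr0 mulr0 vnorm_ge0.
have zpos : 0 < `|z| by rewrite normr_gt0.
have Sz : S (`|z|^-1 *: z).
  by rewrite /S /= normrZ ger0_norm ?invr_ge0 // mulVf // gt_eqF.
have := cmin _ (mem_set Sz); rewrite /= cV_of_rVZ vnormZ normc_real.
by rewrite ger0_norm ?invr_ge0 ?(ltW zpos) // ler_pdivlMl // mulrC.
Unshelve. all: end_near.
Qed.

Lemma normc_coord_le_vnorm : exists2 K : R, 0 < K &
  forall (x : 'cV[C]_n) i, Normc.normc (x i 0) <= K * N x.
Proof.
have [m m0 Hm] := vnorm_cV_of_rV_ge.
exists (2 / m) => [|x i]; first by rewrite divr_gt0.
rewrite -{1}[x]rV_of_cVK; apply: le_trans (normc_cV_of_rV _ _) _.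
rewrite -mulrA ler_wpM2l // ler_pdivlMl // -{2}[x]rV_of_cVK.
exact: Hm.
Qed.

End VectorNorm.

Section OperatorNorm.
Variables (R : realType) (m n : nat).
Variables (Nn : 'cV[R[i]]_n -> R) (Nm : 'cV[R[i]]_m -> R).
Hypotheses (HNn : is_vnorm Nn) (HNm : is_vnorm Nm).
Variable A : 'M[R[i]]_(m, n).
Local Open Scope classical_set_scope.

Lemma mulmx_col_sum (x : 'cV[R[i]]_n) : A *m x = \sum_j x j 0 *: col j A.
Proof.
apply/matrixP => i k; rewrite !mxE summxE; apply: eq_bigr => j _.
by rewrite !mxE !ord1 mulrC.
Qed.

Lemma opnorm_has_sup : has_sup [set Nm (A *m x) | x in [set x | Nn x <= 1]].
Proof.
have [K K0 HK] := normc_coord_le_vnorm HNn.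
split; first by exists (Nm (A *m 0)), 0 => //=; rewrite vnorm0.
exists (K * \sum_j Nm (col j A)) => _ [x /= x1 <-].
rewrite mulmx_col_sum; apply: le_trans (vnorm_sum HNm _ _) _.
rewrite mulr_sumr; apply: ler_sum => j _; rewrite vnormZ // ler_wpM2r //.
  exact: vnorm_ge0.
by apply: le_trans (HK x j) _; rewrite ler_piMr // ltW.
Qed.

Lemma opnorm_ge0 : 0 <= opnorm Nn Nm A.
Proof.
by apply: (sup_upper_bound opnorm_has_sup); exists 0; rewrite /= ?mulmx0 vnorm0.
Qed.

Lemma opnorm_mulmx_le x : Nm (A *m x) <= opnorm Nn Nm A * Nn x.
Proof.
have [->|x0] := eqVneq x 0; first by rewrite mulmx0 !vnorm0 // mulr0.
have Nx := vnorm_gt0 HNn x0.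
have nx : Normc.normc (Nn x)^-1%:C = (Nn x)^-1.
  by rewrite normc_real ger0_norm // invr_ge0 ltW.
have : Nm (A *m ((Nn x)^-1%:C *: x)) <= opnorm Nn Nm A.
  apply: (sup_upper_bound opnorm_has_sup); exists ((Nn x)^-1%:C *: x) => //=.
  by rewrite vnormZ // nx mulVf // gt_eqF.
by rewrite -scalemxAr vnormZ // nx ler_pdivrMl // mulrC.
Qed.

End OperatorNorm.

Lemma char_poly_trmx (K : comNzRingType) n (A : 'M[K]_n) :
  char_poly A^T = char_poly A.
Proof.
rewrite /char_poly -(det_tr (char_poly_mx A)); congr (\det _).
by rewrite /char_poly_mx linearB /= tr_scalar_mx map_trmx.
Qed.

Lemma eigenvalue_cV (K : fieldType) n (A : 'M[K]_n) a :
  eigenvalue A a -> exists2 x : 'cV_n, x != 0 & A *m x = a *: x.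
Proof.
rewrite eigenvalue_root_char -char_poly_trmx -eigenvalue_root_char.
move=> /eigenvalueP [v vA v0]; exists v^T; first by rewrite trmx_eq0.
by rewrite -{1}(trmxK A) -trmx_mul vA linearZ.
Qed.

Lemma eigenvalueZ (K : fieldType) n (A : 'M[K]_n) c a :
  eigenvalue A a -> eigenvalue (c *: A) (c * a).
Proof.
move=> /eigenvalueP [v vA v0]; apply/eigenvalueP; exists v => //.
by rewrite -scalemxAr vA scalerA.
Qed.

Lemma char_poly_split (K : closedFieldType) n (A : 'M[K]_n) : exists rs : seq K,
  char_poly A = \prod_(z <- rs) ('X - z%:P) /\ forall a, eigenvalue A a = (a \in rs).
Proof.
have [rs hrs] := closed_field_poly_normal (char_poly A).
rewrite (monicP (char_poly_monic A)) scale1r in hrs.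
exists rs; split => // a.
by rewrite eigenvalue_root_char hrs root_prod_XsubC.
Qed.

Section SpectralRadius.
Variables (R : realType) (n : nat).
Local Notation C := (R[i]).
Local Open Scope classical_set_scope.

Lemma specrad_has_sup (A : 'M[C]_n) a : eigenvalue A a ->
  has_sup [set Normc.normc a | a in [set a | eigenvalue A a]].
Proof.
move=> ha; split; first by exists (Normc.normc a), a.
have [rs [_ hrs]] := char_poly_split A.
exists (\sum_(z <- rs) Normc.normc z) => _ [b /= hb <-].
rewrite hrs in hb; rewrite (big_rem b) //= lerDl sumr_ge0 // => z _.
exact: normc_ge0.
Qed.

Lemma normc_le_specrad (A : 'M[C]_n) a : eigenvalue A a -> Normc.normc a <= specrad A.
Proof. by move=> ha; apply: (sup_upper_bound (specrad_has_sup ha)); exists a. Qed.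

(* Only possible for [n = 0]; [sup set0] is [0]. *)
Lemma specrad_eigenfree (A : 'M[C]_n) :
  ~ (exists a, eigenvalue A a) -> specrad A = 0.
Proof.
move=> noeig; rewrite /specrad (_ : [set _ | _ in _] = set0) ?sup0 //.
by apply/seteqP; split => // x [a ha _]; apply: noeig; exists a.
Qed.

Lemma specrad_ge0 (A : 'M[C]_n) : 0 <= specrad A.
Proof.
have [[a ha]|noeig] := pselect (exists a, eigenvalue A a).
  exact: le_trans (normc_ge0 a) (normc_le_specrad ha).
by rewrite specrad_eigenfree.
Qed.

Lemma specrad_le (A : 'M[C]_n) (c : R) : 0 <= c ->
  (forall a, eigenvalue A a -> Normc.normc a <= c) -> specrad A <= c.
Proof.
move=> c0 Hc; have [[a ha]|noeig] := pselect (exists a, eigenvalue A a).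
  apply: ge_sup; first by exists (Normc.normc a), a.
  by move=> _ [b hb <-]; apply: Hc.
by rewrite specrad_eigenfree.
Qed.

End SpectralRadius.

Section PowerSummability.
Variable K : numFieldType.

Definition abs_summable (a : nat -> K) :=
  exists M : K, forall k, \sum_(j < k) `|a j| <= M.

Lemma abs_summable_rec (l : K) (a b : nat -> K) : `|l| < 1 ->
  (forall k, a k.+1 = l * a k + b k) -> abs_summable b -> abs_summable a.
Proof.
move=> l1 hab [M hM].
have M0 : 0 <= M by apply: le_trans (hM 0%N); rewrite big_ord0.
have d0 : 0 < 1 - `|l| by rewrite subr_gt0.
exists ((`|a 0%N| + M) / (1 - `|l|)) => -[|k].
  by rewrite big_ord0; apply: divr_ge0; [rewrite addr_ge0 | exact: ltW].
have hS : \sum_(j < k.+1) `|a j| <= `|a 0%N| + `|l| * \sum_(j < k.+1) `|a j| + M.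
  rewrite big_ord_recl -addrA lerD2l.
  have : \sum_(j < k) `|a (bump 0 j)| <= \sum_(j < k) (`|l| * `|a j| + `|b j|).
    apply: ler_sum => j _; rewrite /bump add1n hab -normrM; exact: ler_normD.
  move/le_trans; apply; rewrite big_split lerD ?hM // -mulr_sumr ler_wpM2l //.
  have <- := big_ord_recl k (fun j : 'I_k.+1 => `|a j|).
  by rewrite big_ord_recr /= lerDl.
rewrite ler_pdivlMr // mulrBr mulr1 lerBlDr.
by apply: le_trans hS _; rewrite addrAC mulrC.
Qed.

Lemma abs_summable_mxpow_prod n (A : 'M[K]_n.+1) (ls : seq K) :
  all (fun l => `|l| < 1) ls -> forall w : 'cV_n.+1,
  (forall i, abs_summable (fun k => ((A ^+ k * \prod_(l <- ls) (A - l%:M)) *m w) i 0)) ->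
  forall i, abs_summable (fun k => (A ^+ k *m w) i 0).
Proof.
elim: ls => [|l ls IH] /= => [_|/andP [l1 ls1]] w Hw i.
  by have := Hw i; under eq_fun do rewrite big_nil mulr1.
apply: IH => // j; set P := \prod_(l0 <- ls) (A - l0%:M).
apply: (@abs_summable_rec l _ (fun k => ((A ^+ k * ((A - l%:M) * P)) *m w) j 0)) => //.
  move=> k; have -> : A ^+ k * ((A - l%:M) * P) = A ^+ k.+1 * P - l *: (A ^+ k * P).
    rewrite mulrBl mulrBr exprSr -mulrA; congr (_ - _).
    by rewrite -mulmxE mul_scalar_mx scalerAr mulmxE.
  by rewrite mulmxBl -scalemxAl !mxE [RHS]addrC subrK.
by have := Hw j; under eq_fun do rewrite big_cons.
Qed.

End PowerSummability.

Lemma ler_mxpow_subinvariant (K : numDomainType) n (B : 'M[K]_n) (y : 'cV[K]_n) :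
  (forall i j, 0 <= B i j) -> (forall i, y i 0 <= (B *m y) i 0) ->
  forall k i, y i 0 <= (B ^+ k *m y) i 0.
Proof.
move=> B0 Hy; elim=> [|k IH] i; first by rewrite mul1mx.
rewrite exprS -mulmxE -mulmxA; apply: le_trans (Hy i) _.
by rewrite !mxE; apply: ler_sum => j _; apply: ler_wpM2l.
Qed.

Section CollatzWielandt.
Variable R : realType.
Local Notation C := (R[i]).

Lemma abs_summable_mxpow n (A : 'M[C]_n.+1) :
  (forall a, eigenvalue A a -> `|a| < 1) ->
  forall (w : 'cV_n.+1) i, abs_summable (fun k => (A ^+ k *m w) i 0).
Proof.
move=> eigA w; have [rs [Ars eigE]] := char_poly_split A.
have rs1 : all (fun l => `|l| < 1) rs by apply/allP => z; rewrite -eigE; exact: eigA.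
have CH : \prod_(l <- rs) (A - l%:M) = 0.
  have := Cayley_Hamilton A; rewrite Ars rmorph_prod /=.
  by under eq_bigr do rewrite rmorphB /= horner_mx_X horner_mx_C.
apply: (abs_summable_mxpow_prod rs1) => i; exists 0 => k.
by rewrite big1 // => j _; rewrite CH mulr0 mul0mx mxE normr0.
Qed.

Lemma natmul_unbounded (c M : C) : 0 < c -> ~ (forall k, k%:R * c <= M).
Proof.
move=> c0 HM; have M0 : 0 <= M by have := HM 0%N; rewrite mul0r.
have [c' ceq] : exists c', c = c'%:C by exists (complex.Re c); rewrite RRe_real ?gtr0_real.
have [M' Meq] : exists M', M = M'%:C by exists (complex.Re M); rewrite RRe_real ?ger0_real.
rewrite ceq ltcR in c0; rewrite Meq lecR in M0.
have := HM (Num.bound (M' / c')); rewrite ceq Meq.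
rewrite -(rmorph_nat (real_complex R)) -rmorphM /= lecR.
have := archi_boundP (divr_ge0 M0 (ltW c0)).
by rewrite ltr_pdivrMr // => /lt_le_trans h /h; rewrite ltxx.
Qed.

(* If [specrad B < mu], every eigenvalue of [B / mu] lies in the open unit
   disc, so the powers of [B / mu] applied to [y] are summable, whereas
   subinvariance keeps them above [y]. *)
Lemma specrad_ge_subinvariant n (B : 'M[C]_n) (y : 'cV[C]_n) (mu : R) :
  (forall i j, 0 <= B i j) -> (forall i, 0 <= y i 0) -> y != 0 -> 0 <= mu ->
  (forall i, mu%:C * y i 0 <= (B *m y) i 0) -> mu <= specrad B.
Proof.
move=> B0 y0 yn0 mu0 Hy; have [->|mun0] := eqVneq mu 0; first exact: specrad_ge0.
have mu_gt0 : 0 < mu by rewrite lt_def mun0.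
have muC_gt0 : 0 < mu%:C by rewrite ltcR.
rewrite leNgt; apply/negP => rho_lt.
case: n B y B0 y0 yn0 Hy rho_lt => [|n] B y B0 y0 yn0 Hy rho_lt.
  by rewrite flatmx0 eqxx in yn0.
pose B' := mu%:C^-1 *: B.
have B'0 i j : 0 <= B' i j by rewrite mxE mulr_ge0 // invr_ge0 ltW.
have eigB' a : eigenvalue B' a -> `|a| < 1.
  move=> /(eigenvalueZ mu%:C); rewrite scalerA mulfV ?gt_eqF // scale1r.
  move=> /normc_le_specrad /le_lt_trans /(_ rho_lt).
  rewrite Normc.normcM normc_real ger0_norm // -{2}[mu]mulr1 ltr_pM2l // => h.
  by rewrite -normcE (_ : 1 = 1%:C) // ltcR.
have subinv i : y i 0 <= (B' *m y) i 0.
  by rewrite -scalemxAl mxE ler_pdivlMl.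
have [i0 yi0] : exists i, y i 0 != 0.
  by have /matrix0Pn [i [j]] := yn0; rewrite ord1; exists i.
have [M HM] := abs_summable_mxpow eigB' y i0.
apply: (natmul_unbounded (c := y i0 0) (M := M)); first by rewrite lt_def yi0 y0.
move=> k; apply: le_trans (HM k).
rewrite mulr_natl -[in X in _ *+ X](card_ord k) -sumr_const.
apply: ler_sum => j _; have := ler_mxpow_subinvariant B'0 subinv j i0.
by move=> h; apply: le_trans h (real_ler_norm (ger0_real (le_trans (y0 i0) h))).
Qed.

Lemma specrad_le_dominated n (A B : 'M[C]_n) (c : R) :
  0 <= c -> (forall i j, 0 <= B i j) -> (forall i j, `|A i j| <= c%:C * B i j) ->
  specrad A <= c * specrad B.
Proof.
move=> c0 B0 AB; apply: specrad_le => [|a ha]; first by rewrite mulr_ge0 ?specrad_ge0.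
have [x x0 Ax] := eigenvalue_cV ha.
pose y := \col_j `|x j 0|.
have y0 i : 0 <= y i 0 by rewrite mxE.
have Hy i : (Normc.normc a)%:C * y i 0 <= c%:C * (B *m y) i 0.
  have -> : (Normc.normc a)%:C * y i 0 = `|(A *m x) i 0| by rewrite Ax !mxE normrM.
  rewrite !mxE mulr_sumr; apply: le_trans (ler_norm_sum _ _ _) _.
  by apply: ler_sum => j _; rewrite mxE normrM mulrA ler_wpM2r.
have yn0 : y != 0.
  have /matrix0Pn [i [j]] := x0; rewrite ord1 => xi0.
  by apply/matrix0Pn; exists i, 0; rewrite mxE normr_eq0.
have [c_eq0|cn0] := eqVneq c 0.
  rewrite c_eq0 mul0r; have /matrix0Pn [i [j]] := yn0; rewrite ord1 => yi0.
  have := Hy i; rewrite c_eq0 mul0r pmulr_lle0; last by rewrite lt_def yi0 y0.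
  by rewrite (_ : 0 = 0%:C) // lecR.
have cpos : 0 < c by rewrite lt_def cn0.
rewrite -ler_pdivrMl //; apply: (specrad_ge_subinvariant B0 y0 yn0).
  by rewrite mulr_ge0 ?normc_ge0 // invr_ge0.
move=> i; rewrite -(ler_pM2l (_ : 0 < c%:C)) ?ltcR //.
by rewrite mulrA -rmorphM /= mulrA mulfV ?mul1r.
Qed.

End CollatzWielandt.

Definition bidx_of {V : finType} {F : {set {set V}}} {r : V -> nat}
  (e : dedge F) (s : 'I_(r (tgt e))) : bidx F r :=
  Tagged (fun f : dedge F => 'I_(r (tgt f))) s.
Arguments bidx_of {V F r} e s.

Section DirectedEdgeMatrix.
Variables (R : realType) (V : finType) (F : {set {set V}}).
Local Notation C := (R[i]).

Lemma big_bidx (r : V -> nat) (G : 'I_#|bidx F r| -> C) :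
  \sum_j G j = \sum_(f : dedge F) \sum_(t < r (tgt f)) G (enum_rank (bidx_of f t)).
Proof.
rewrite (eq_bigr (G \o enum_rank \o enum_val)) => [|j _]; last by rewrite /= enum_valK.
rewrite -(big_enum_val (G \o enum_rank)) /=.
rewrite (@sig_big_dep _ _ _ _ (fun f : dedge F => 'I_(r (tgt f))) predT
  (fun _ _ => true) (fun f t => G (enum_rank (bidx_of f t)))).
by apply: eq_big => -[f t].
Qed.

Lemma Mop_scalwE (w : {set V} -> V -> V -> R) j k :
  Mop F (scalw w) j k =
  if nbr (tag (enum_val k)) (tag (enum_val j))
  then (w (src (tag (enum_val j))) (tgt (tag (enum_val k))) (tgt (tag (enum_val j))))%:C
  else 0.
Proof. by rewrite mxE /=; case: ifP => // _; rewrite /scalw mxE !ord1 eqxx mulr1n. Qed.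

Lemma Mop_scalw_ge0 (w : {set V} -> V -> V -> R) : (forall a i j, 0 <= w a i j) ->
  forall j k, 0 <= Mop F (scalw w) j k.
Proof. by move=> w0 j k; rewrite Mop_scalwE; case: ifP; rewrite ?ler0c. Qed.

Lemma maxw_ge0 (w : {set V} -> V -> V -> R) : 0 <= maxw F w.
Proof. exact: bigmax_ge_id. Qed.

Lemma le_maxw (w : {set V} -> V -> V -> R) (e f : dedge F) :
  nbr f e -> w (src e) (tgt f) (tgt e) <= maxw F w.
Proof.
case/and3P => fe tfe _; have /andP [eF te] := valP e.
apply: le_trans (le_bigmax_cond _ _ eF); apply: le_trans (le_bigmax_cond _ _ fe).
by apply: (le_bigmax_cond _ (fun j => w (src e) (tgt f) j)); rewrite /tgt te eq_sym.
Qed.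

Lemma specrad_Mop_scalw_le (w : {set V} -> V -> V -> R) : (forall a i j, 0 <= w a i j) ->
  specrad (Mop F (scalw w)) <= maxw F w * specrad (Mop F (scalw (fun _ _ _ => 1))).
Proof.
move=> w0; apply: specrad_le_dominated (maxw_ge0 w) (Mop_scalw_ge0 _) _ => // j k.
rewrite !Mop_scalwE; case: ifP => [fe|_]; last by rewrite normr0 mulr0.
by rewrite -rmorphM mulr1 ger0_norm ?lecR ?le_maxw ?ler0c.
Qed.

Section Blocks.
Variable r : V -> nat.

Definition Mop_block (x : 'cV[C]_#|bidx F r|) (e : dedge F) : 'cV[C]_(r (tgt e)) :=
  \col_s x (enum_rank (bidx_of e s)) 0.

Lemma Mop_eigen_block (u : forall (a : {set V}) (i j : V), 'M[C]_(r j, r i)) x a :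
  Mop F u *m x = a *: x -> forall e,
  a *: Mop_block x e = \sum_(f | nbr f e) u (src e) (tgt f) (tgt e) *m Mop_block x f.
Proof.
move=> Ax e; apply/matrixP => s k; rewrite ord1 summxE.
have /(congr1 (fun y : 'cV_#|bidx F r| => y (enum_rank (bidx_of e s)) 0)) := Ax.
rewrite !mxE => <-; rewrite big_bidx [RHS]big_mkcond /=; apply: eq_bigr => f _.
under eq_bigr do rewrite mxE !enum_rankK /=.
case: ifP => _; last by rewrite big1 // => t _; rewrite mul0r.
by rewrite mxE; apply: eq_bigr => t _; rewrite mxE.
Qed.

End Blocks.

Lemma Mop_scalw_mul_col (w : {set V} -> V -> V -> R) (g : dedge F -> R) j :
  (Mop F (scalw w) *m \col_k (g (tag (enum_val k)))%:C) j 0 =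
  (\sum_(f | nbr f (tag (enum_val j)))
     w (src (tag (enum_val j))) (tgt f) (tgt (tag (enum_val j))) * g f)%:C.
Proof.
rewrite mxE big_bidx rmorph_sum [RHS]big_mkcond /=; apply: eq_bigr => f _.
rewrite big_ord1 Mop_scalwE !mxE !enum_rankK /=.
by case: ifP => _; rewrite ?mul0r // rmorphM.
Qed.

End DirectedEdgeMatrix.

Section BlockNorms.
Variables (R : realType) (V : finType) (F : {set {set V}}) (r : V -> nat).
Local Notation C := (R[i]).

Lemma Mop_block_neq0 (x : 'cV[C]_#|bidx F r|) : x != 0 -> exists e, Mop_block x e != 0.
Proof.
case/matrix0Pn => i [j]; rewrite ord1 => xi0; exists (tag (enum_val i)).
apply/matrix0Pn; exists (tagged (enum_val i)), 0; rewrite mxE.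
by rewrite (_ : bidx_of _ _ = enum_val i) ?enum_valK //; case: (enum_val i).
Qed.

Lemma specrad_Mop_le_opnorm (u : forall (a : {set V}) (i j : V), 'M[C]_(r j, r i))
  (N : forall i : V, 'cV[C]_(r i) -> R) : (forall i, is_vnorm (N i)) ->
  specrad (Mop F u) <=
  specrad (Mop F (scalw (fun a i j => opnorm (N i) (N j) (u a i j)))).
Proof.
move=> HN; apply: specrad_le (specrad_ge0 _) _ => a ha.
have [x x0 Ax] := eigenvalue_cV ha.
pose g e := N (tgt e) (Mop_block x e).
apply: (@specrad_ge_subinvariant _ _ _ (\col_k (g (tag (enum_val k)))%:C)).
- by apply: Mop_scalw_ge0 => b i j; apply: opnorm_ge0.
- by move=> k; rewrite mxE ler0c vnorm_ge0.
- have [e xe0] := Mop_block_neq0 x0.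
  apply/matrix0Pn; exists (enum_rank (bidx_of (r := fun=> 1%N) e ord0)), 0.
  by rewrite mxE enum_rankK /= eq_sym lt_eqF // ltcR vnorm_gt0.
- exact: normc_ge0.
move=> k; rewrite mxE Mop_scalw_mul_col -rmorphM lecR /g -vnormZ //.
rewrite (Mop_eigen_block Ax); apply: le_trans (vnorm_sum _ _ _) _ => //.
by apply: ler_sum => f _; apply: opnorm_mulmx_le.
Qed.

End BlockNorms.

Theorem proposition1 (R : realType) (V : finType) (F : {set {set V}})
  (r : V -> nat) (r_pos : forall v : V, (0 < r v)%N)
  (u : forall (a : {set V}) (v w : V), 'M[R[i]]_(r w, r v))
  (N : forall v : V, 'cV[R[i]]_(r v) -> R)
  (HN : forall v : V, is_vnorm (N v)) :
  let nu := fun (a : {set V}) (v w : V) => opnorm (N v) (N w) (u a v w) in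
  specrad (Mop F u) <= specrad (Mop F (scalw nu))
  /\ specrad (Mop F (scalw nu))
     <= maxw F nu * specrad (Mop F (scalw (fun _ _ _ => 1))).
Proof.
move=> nu; split; first exact: specrad_Mop_le_opnorm.
by apply: specrad_Mop_scalw_le => a v w; apply: opnorm_ge0.
Qed.
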